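(* Every extended Runge--Kutta method is affine equivariant: if $a(x)=Ax+b$ is an affine map from $\mathbb{R}^p$ to $\mathbb{R}^n$, $f$ is a vector field on $\mathbb{R}^p$ and $g$ a vector field on $\mathbb{R}^n$ with $g(Ax+b)=Af(x)$ for all $x\in\mathbb{R}^p$, then $a\circ\Phi_h(f)=\Phi_h(g)\circ a$, where $\Phi_h(f)$ denotes the step map $z_0\mapsto z_1$ of the extended Runge--Kutta method applied to $\dot z=f(z)$ (whenever these step maps are well defined).
   Context: Fix integers $m\ge s\ge1$, real coefficients $a_{ij}$ ($1\le i\le s$, $1\le j\le m$), $b_i$ ($1\le i\le m$), and a full-rank $(m-s)\times m$ real matrix $(d_{ij})$. For an ODE $\dot z=f(z)$ on $\mathbb{R}^n$, the extended Runge--Kutta method with these parameters maps $z_0$ to $z_1$ defined by the equations, with unknowns $k_1,\dots,k_m\in\mathbb{R}^n$: $Z_i=z_0+h\sum_{j=1}^m a_{ij}k_j$ ($i=1,\dots,s$), $k_i=f(Z_i)$ ($i=1,\dots,s$), $0=\sum_{j=1}^m d_{ij}k_j$ ($i=1,\dots,m-s$), and $z_1=z_0+h\sum_{i=1}^m b_ik_i$. The same parameters are used for vector fields in every dimension. *)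

From HB Require Import structures.
From mathcomp Require Import all_boot all_order all_algebra.
From mathcomp Require Import reals.
Set Implicit Arguments. Unset Strict Implicit. Unset Printing Implicit Defensive.
Import Order.TTheory GRing.Theory Num.Theory.
Local Open Scope ring_scope.

Definition ERK_step (R : realType) (m s : nat) (hsm : (s <= m)%N)
    (a : 'M[R]_(s, m)) (bb : 'rV[R]_m) (d : 'M[R]_(m - s, m))
    (n : nat) (f : 'cV[R]_n -> 'cV[R]_n) (h : R) (z0 z1 : 'cV[R]_n) : Prop :=
  exists k : 'I_m -> 'cV[R]_n,
    (forall i : 'I_s,
        k (widen_ord hsm i) = f (z0 + h *: \sum_(j < m) a i j *: k j)) /\
    (forall i : 'I_(m - s), \sum_(j < m) d i j *: k j = 0) /\
    z1 = z0 + h *: \sum_(i < m) bb 0 i *: k i.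

Definition ERK_well_defined (R : realType) (m s : nat) (hsm : (s <= m)%N)
    (a : 'M[R]_(s, m)) (bb : 'rV[R]_m) (d : 'M[R]_(m - s, m))
    (n : nat) (f : 'cV[R]_n -> 'cV[R]_n) (h : R) (z0 : 'cV[R]_n) : Prop :=
  exists! z1, ERK_step hsm a bb d f h z0 z1.

From HB Require Import structures.
From mathcomp Require Import all_boot all_order all_algebra.
From mathcomp Require Import reals.
Set Implicit Arguments. Unset Strict Implicit. Unset Printing Implicit Defensive.
Import Order.TTheory GRing.Theory Num.Theory.
Local Open Scope ring_scope.

(* If k_1..k_m are stage vectors for f at z0, then A k_1..A k_m are stage
   vectors for g at A z0 + b: the affine map sends z0 + h sum_j a_ij k_j to
   (A z0 + b) + h sum_j a_ij A k_j, and the constraints sum_j d_ij k_j = 0 are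
   linear.  Uniqueness of the step of g at A z0 + b then forces y1 = A x1 + b. *)

Section ExtendedRungeKutta.

Variables (R : realType) (m s : nat) (hsm : (s <= m)%N).
Variables (a : 'M[R]_(s, m)) (bb : 'rV[R]_m) (d : 'M[R]_(m - s, m)).

Lemma mulmx_sum_scale (n p : nat) (A : 'M[R]_(n, p)) (c : 'I_m -> R)
    (k : 'I_m -> 'cV[R]_p) :
  A *m (\sum_(j < m) c j *: k j) = \sum_(j < m) c j *: (A *m k j).
Proof. by rewrite mulmx_sumr; apply: eq_bigr => j _; rewrite scalemxAr. Qed.

Lemma ERK_step_affine (p n : nat) (A : 'M[R]_(n, p)) (b : 'cV[R]_n)
    (f : 'cV[R]_p -> 'cV[R]_p) (g : 'cV[R]_n -> 'cV[R]_n)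
    (hfg : forall x : 'cV[R]_p, g (A *m x + b) = A *m f x)
    (h : R) (x x1 : 'cV[R]_p) :
  ERK_step hsm a bb d f h x x1 ->
  ERK_step hsm a bb d g h (A *m x + b) (A *m x1 + b).
Proof.
have affine_update (z : 'cV[R]_p) (c : 'I_m -> R) (k : 'I_m -> 'cV[R]_p) :
    A *m (z + h *: \sum_(j < m) c j *: k j) + b
    = A *m z + b + h *: \sum_(j < m) c j *: (A *m k j).
  by rewrite mulmxDr -scalemxAr mulmx_sum_scale addrAC.
case=> k [stage [constraint ->]]; exists (fun j => A *m k j); split; [|split].
- by move=> i; rewrite stage -hfg affine_update.
- by move=> i; rewrite -mulmx_sum_scale constraint mulmx0.
- exact: affine_update.
Qed.

Lemma ERK_step_unique (n : nat) (f : 'cV[R]_n -> 'cV[R]_n) (h : R)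
    (z0 z1 z2 : 'cV[R]_n) :
  ERK_well_defined hsm a bb d f h z0 ->
  ERK_step hsm a bb d f h z0 z1 -> ERK_step hsm a bb d f h z0 z2 -> z1 = z2.
Proof. by case=> z [_ uniq] /uniq <- /uniq <-. Qed.

End ExtendedRungeKutta.

Theorem proposition2 (R : realType) (m s : nat) (hs1 : (1 <= s)%N)
    (hsm : (s <= m)%N) (a : 'M[R]_(s, m)) (bb : 'rV[R]_m)
    (d : 'M[R]_(m - s, m)) (hd : \rank d = (m - s)%N)
    (p n : nat) (A : 'M[R]_(n, p)) (b : 'cV[R]_n)
    (f : 'cV[R]_p -> 'cV[R]_p) (g : 'cV[R]_n -> 'cV[R]_n)
    (hfg : forall x : 'cV[R]_p, g (A *m x + b) = A *m f x)
    (h : R) (x : 'cV[R]_p) :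
  ERK_well_defined hsm a bb d f h x ->
  ERK_well_defined hsm a bb d g h (A *m x + b) ->
  forall (x1 : 'cV[R]_p) (y1 : 'cV[R]_n),
    ERK_step hsm a bb d f h x x1 ->
    ERK_step hsm a bb d g h (A *m x + b) y1 ->
    y1 = A *m x1 + b.
Proof.
move=> _ g_well_defined x1 y1 f_step g_step.
exact: ERK_step_unique g_well_defined g_step (ERK_step_affine hfg f_step).
Qed.
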